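(* Let $\lambda>0$, $0<\gamma\le\frac{\lambda}{\lambda^2+2\lambda(1+\beta)\Phi_{\max}^2+(1+\beta)^2\Phi_{\max}^4}$, and $\tilde C=I-\gamma(A+\lambda I)$. For every random vector $x\in\mathbb R^d$ with $\mathbb E\|x\|_2^2<\infty$ and every $t\ge0$, $$\sum_{i=0}^{t}\mathbb E\big[\|\tilde C^ix\|_2^2\big]\le\frac{\mathbb E\|x\|_2^2}{\gamma(\mu+\lambda)}.$$
   Context: Let $\mathcal S=\{1,\dots,n\}$ be finite, $\pi$ a policy with irreducible state transition matrix $P^\pi$ and stationary distribution $\rho$, $D=\mathrm{diag}(\rho)$, $\beta\in(0,1)$, features $\phi:\mathcal S\to\mathbb R^d$ with $\|\phi(s)\|_2\le\Phi_{\max}$, $\Phi\in\mathbb R^{n\times d}$ with rows $\phi(s)^\top$ of full column rank, $A=\Phi^\top D(I-\beta P^\pi)\Phi$. The paper calls $\mu$ ''the minimum eigenvalue of $A$''; take $\mu=\lambda_{\min}((A+A^\top)/2)>0$. *)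

From HB Require Import structures.
From mathcomp Require Import all_boot all_order all_algebra.
From mathcomp Require Import all_classical all_reals all_analysis.
Set Implicit Arguments. Unset Strict Implicit. Unset Printing Implicit Defensive.
Import Order.TTheory GRing.Theory Num.Theory.
Local Open Scope ring_scope.

Definition sqnorm (R : realType) (d : nat) (v : 'cV[R]_d) : R :=
  \sum_(i < d) v i 0 ^+ 2.

(* Euclidean norm of a row vector (feature vector phi(s) = row s Phi) *)
Definition rnorm (R : realType) (d : nat) (v : 'rV[R]_d) : R :=
  Num.sqrt (\sum_(j < d) v 0 j ^+ 2).

Definition stochastic (R : realType) (n : nat) (P : 'M[R]_n) : Prop :=
  (forall i j, 0 <= P i j) /\ (forall i, \sum_(j < n) P i j = 1).

Definition irreducible_mx (R : realType) (n : nat) (P : 'M[R]_n) : Prop :=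
  forall i j : 'I_n, exists k : nat, 0 < (P ^+ k) i j.

Definition stationary_dist (R : realType) (n : nat) (P : 'M[R]_n) (rho : 'rV[R]_n) : Prop :=
  (forall i, 0 <= rho 0 i) /\ \sum_(i < n) rho 0 i = 1 /\ rho *m P = rho.

Definition TD_A (R : realType) (n d : nat) (Phi : 'M[R]_(n, d)) (rho : 'rV[R]_n)
  (P : 'M[R]_n) (beta : R) : 'M[R]_d :=
  Phi^T *m diag_mx rho *m (1%:M - beta *: P) *m Phi.

Definition min_eigenvalue (R : realType) (d : nat) (S : 'M[R]_d) (mu : R) : Prop :=
  eigenvalue S mu /\ (forall a, eigenvalue S a -> mu <= a).

From HB Require Import structures.
From mathcomp Require Import all_boot all_order all_algebra.
From mathcomp Require Import all_classical all_reals all_analysis.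
From mathcomp Require Import measurable_realfun.
From mathcomp Require Import ring lra.
Set Implicit Arguments. Unset Strict Implicit. Unset Printing Implicit Defensive.
Import Order.TTheory GRing.Theory Num.Theory.
Local Open Scope ring_scope.

(* Let [S] be the symmetric part of [A].  Stationarity of [rho] gives
   [<w, P w>_D <= |w|_D^2], so [A] is positive semidefinite and [mu >= 0];
   the infimum of the Rayleigh quotient of [S] is an eigenvalue, so
   [mu |v|^2 <= v^T A v]; and [|A v| <= (1 + beta) Phimax^2 |v|].  Expanding
   [|C v|^2], the step-size condition [gamma (lambda + (1 + beta) Phimax^2)^2 <= lambda]
   then yields [|C v|^2 <= (1 - gamma (mu + lambda)) |v|^2].  Hence
   [E |C^i x|^2 <= r^i E |x|^2] with [r = 1 - gamma (mu + lambda)], and the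
   geometric series sums to at most [1 / (gamma (mu + lambda))]. *)

Section DotProduct.
Variable R : realFieldType.

Definition dot d (u v : 'cV[R]_d) : R := (u^T *m v) 0 0.

Lemma dotE d (u v : 'cV[R]_d) : dot u v = \sum_i u i 0 * v i 0.
Proof. by rewrite /dot mxE; apply: eq_bigr => i _; rewrite mxE. Qed.

Lemma dotC d (u v : 'cV[R]_d) : dot u v = dot v u.
Proof. by rewrite !dotE; apply: eq_bigr => i _; rewrite mulrC. Qed.

Lemma dotDr d (u v w : 'cV[R]_d) : dot u (v + w) = dot u v + dot u w.
Proof. by rewrite /dot mulmxDr mxE. Qed.

Lemma dotZr d a (u v : 'cV[R]_d) : dot u (a *: v) = a * dot u v.
Proof. by rewrite /dot -scalemxAr mxE. Qed.

Lemma dotBr d (u v w : 'cV[R]_d) : dot u (v - w) = dot u v - dot u w.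
Proof. by rewrite dotDr -scaleN1r dotZr mulN1r. Qed.

Lemma dotDl d (u v w : 'cV[R]_d) : dot (v + w) u = dot v u + dot w u.
Proof. by rewrite dotC dotDr !(dotC u). Qed.

Lemma dotZl d a (u v : 'cV[R]_d) : dot (a *: v) u = a * dot v u.
Proof. by rewrite dotC dotZr dotC. Qed.

Lemma dotBl d (u v w : 'cV[R]_d) : dot (v - w) u = dot v u - dot w u.
Proof. by rewrite dotC dotBr !(dotC u). Qed.

Lemma dot_mulmx d e (M : 'M[R]_(d, e)) (u : 'cV[R]_d) (v : 'cV[R]_e) :
  dot u (M *m v) = dot (M^T *m u) v.
Proof. by rewrite /dot trmx_mul trmxK mulmxA. Qed.

Lemma dot_scalar_mx d (a : R) (u v : 'cV[R]_d) : dot u (a%:M *m v) = a * dot u v.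
Proof. by rewrite mul_scalar_mx dotZr. Qed.

Lemma dot_ge0 d (u : 'cV[R]_d) : 0 <= dot u u.
Proof. by rewrite dotE; apply: sumr_ge0 => i _; rewrite -expr2 sqr_ge0. Qed.

Lemma sqr_coef_le_dot d (u : 'cV[R]_d) i : u i 0 ^+ 2 <= dot u u.
Proof.
rewrite dotE (bigD1 i) //= -expr2 lerDl.
by apply: sumr_ge0 => j _; rewrite -expr2 sqr_ge0.
Qed.

Lemma dot_eq0 d (u : 'cV[R]_d) : dot u u = 0 -> u = 0.
Proof.
move=> u0; apply/matrixP => i j; rewrite (ord1 j) mxE.
by apply/eqP; rewrite -sqrf_eq0 eq_le sqr_ge0 andbT -u0 sqr_coef_le_dot.
Qed.

Lemma dot_linear_comb d a b (u v : 'cV[R]_d) :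
  dot (a *: u + b *: v) (a *: u + b *: v) =
  a ^+ 2 * dot u u + 2 * a * b * dot u v + b ^+ 2 * dot v v.
Proof. by rewrite !dotDl !dotDr !dotZl !dotZr (dotC v u); ring. Qed.

(* Expand [0 <= |B u - C v|^2] with [B = |v|^2] and [C = <u, v>]. *)
Lemma dot_cauchy_schwarz d (u v : 'cV[R]_d) : dot u v ^+ 2 <= dot u u * dot v v.
Proof.
have [v0|] := eqVneq (dot v v) 0.
  by rewrite v0 mulr0 (dot_eq0 v0) /dot mulmx0 mxE expr0n.
move=> vnz; have vpos : 0 < dot v v by rewrite lt0r vnz dot_ge0.
have := dot_ge0 (dot v v *: u + (- dot u v) *: v).
rewrite dot_linear_comb.
have -> : dot v v ^+ 2 * dot u u + 2 * dot v v * - dot u v * dot u v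
    + (- dot u v) ^+ 2 * dot v v = dot v v * (dot u u * dot v v - dot u v ^+ 2) by ring.
by rewrite pmulr_rge0 // subr_ge0.
Qed.

Lemma sqr_convex_comb_le n (p a : 'I_n -> R) :
  (forall i, 0 <= p i) -> \sum_i p i = 1 ->
  (\sum_i p i * a i) ^+ 2 <= \sum_i p i * a i ^+ 2.
Proof.
move=> p_ge0 p_sum1; set m := \sum_i p i * a i.
have var_ge0 : 0 <= \sum_i p i * (a i - m) ^+ 2.
  by apply: sumr_ge0 => i _; rewrite mulr_ge0 ?sqr_ge0.
have var_expand : \sum_i p i * (a i - m) ^+ 2 =
    \sum_i p i * a i ^+ 2 - 2 * m * m + m ^+ 2 * \sum_i p i.
  rewrite [in 2 * m * m]/m mulr_sumr [_ * \sum_i p i]mulr_sumr -sumrB -big_split /=.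
  by apply: eq_bigr => i _; rewrite -/m; ring.
by rewrite var_expand p_sum1 in var_ge0; nra.
Qed.

End DotProduct.

Section QuadraticForms.
Variable R : realType.

Lemma quad_form_bounded d (B : 'M[R]_d) :
  exists2 c, 0 <= c & forall v, `|dot v (B *m v)| <= c * dot v v.
Proof.
exists (\sum_i \sum_j `|B i j|).
  by apply: sumr_ge0 => i _; apply: sumr_ge0.
move=> v; rewrite dotE; under eq_bigr do rewrite mxE big_distrr.
apply: le_trans (ler_norm_sum _ _ _) _; rewrite mulr_suml; apply: ler_sum => i _.
apply: le_trans (ler_norm_sum _ _ _) _; rewrite mulr_suml; apply: ler_sum => j _ /=.
rewrite mulrCA normrM ler_wpM2l // normrM.
have := sqr_coef_le_dot v i; have := sqr_coef_le_dot v j.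
rewrite -!(real_normK (num_real (v _ 0))).
by have := normr_ge0 (v i 0); have := normr_ge0 (v j 0); nra.
Qed.

Lemma mulmx_dot_bounded d (B : 'M[R]_d) :
  exists2 c, 0 <= c & forall v, dot (B *m v) (B *m v) <= c * dot v v.
Proof.
have [c c_ge0 hc] := quad_form_bounded (B^T *m B).
by exists c => // v; rewrite dot_mulmx mulmxA dotC (le_trans (ler_norm _)).
Qed.

(* Expand [0 <= q_S (K v - S v)] and use [q_S (S v) <= K |S v|^2]. *)
Lemma psd_mulmx_dot_bounded d (S : 'M[R]_d) : S^T = S ->
  (forall v, 0 <= dot v (S *m v)) ->
  exists2 K, 0 < K & forall v, dot (S *m v) (S *m v) <= K * dot v (S *m v).
Proof.
move=> S_sym S_psd; have [c c_ge0 hc] := quad_form_bounded S.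
exists (c + 1) => [|v]; first by rewrite ltr_pwDr.
set K := c + 1; set w := S *m v.
have qw : dot w (S *m w) <= K * dot w w.
  apply: le_trans (ler_norm _) (le_trans (hc w) _).
  by rewrite ler_wpM2r ?dot_ge0 // lerDl.
have := S_psd (K *: v - w).
rewrite mulmxBr -scalemxAr -/w dotBl !dotBr !dotZl !dotZr.
rewrite [dot v (S *m w)]dot_mulmx S_sym -/w (dotC v w) => h.
have K_gt0 : 0 < K by rewrite ltr_pwDr.
rewrite -(ler_pM2l K_gt0); nra.
Qed.

Lemma psd_det_eq0 d (S : 'M[R]_d) : S^T = S ->
  (forall v, 0 <= dot v (S *m v)) ->
  (forall e, 0 < e -> exists2 v, 0 < dot v v & dot v (S *m v) <= e * dot v v) ->
  \det S = 0.
Proof.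
move=> S_sym S_psd small; apply/eqP/negPn/negP => detS.
have [K K_gt0 hK] := psd_mulmx_dot_bounded S_sym S_psd.
have [L L_ge0 hL] := mulmx_dot_bounded (\adj S).
have det2_gt0 : 0 < \det S ^+ 2 by rewrite exprn_even_gt0.
have LK1_gt0 : 0 < L * K + 1 by rewrite ltr_pwDr ?mulr_ge0 // ltW.
set e := \det S ^+ 2 / (L * K + 1).
have [v v_gt0 qv] := small e (divr_gt0 det2_gt0 LK1_gt0).
have LKe_lt : L * K * e < \det S ^+ 2.
  by rewrite mulrA ltr_pdivrMr //; nra.
(* [adj S * S = det S * 1], so [det S ^ 2 |v|^2 = |adj S (S v)|^2 <= L K q_S(v)]. *)
have := hL (S *m v); rewrite mulmxA mul_adj_mx mul_scalar_mx dotZl dotZr mulrA -expr2.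
have := hK v; have := ler_wpM2l L_ge0 (ler_wpM2l (ltW K_gt0) qv).
by nra.
Qed.

Lemma sym_part_tr d (A : 'M[R]_d) :
  ((2%:R)^-1 *: (A + A^T))^T = (2%:R)^-1 *: (A + A^T).
Proof. by rewrite linearZ /= linearD /= trmxK addrC. Qed.

Lemma dot_sym_part d (A : 'M[R]_d) v :
  dot v (((2%:R)^-1 *: (A + A^T)) *m v) = dot v (A *m v).
Proof.
rewrite -scalemxAl mulmxDl dotZr dotDr [dot v (A^T *m v)]dot_mulmx trmxK.
by rewrite (dotC (A *m v)); field.
Qed.

Lemma eigenvalue_dim_gt0 d (S : 'M[R]_d) a : eigenvalue S a -> (0 < d)%N.
Proof. by case: d S => // S /eigenvalueP[u _]; rewrite thinmx0 eqxx. Qed.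

Lemma psd_eigenvalue_ge0 d (S : 'M[R]_d) a :
  (forall v, 0 <= dot v (S *m v)) -> eigenvalue S a -> 0 <= a.
Proof.
move=> S_psd /eigenvalueP[u uS u_neq0].
have v_gt0 : 0 < dot u^T u^T.
  by rewrite lt0r dot_ge0 andbT; apply: contra u_neq0 => /eqP/dot_eq0/eqP; rewrite trmx_eq0.
have := S_psd u^T; rewrite dot_mulmx -trmx_mul uS linearZ /= dotZl.
by rewrite pmulr_lge0.
Qed.

(* The infimum of the Rayleigh quotient of [S] is an eigenvalue. *)
Lemma sym_eigenvalue_rayleigh_lb d (S : 'M[R]_d) : (0 < d)%N -> S^T = S ->
  exists m, eigenvalue S m /\ forall v, m * dot v v <= dot v (S *m v).
Proof.
move=> d_gt0 S_sym.
pose E : set R := fun r => exists2 v, 0 < dot v v & r = dot v (S *m v) / dot v v.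
have E_neq0 : exists r, E r.
  pose v : 'cV[R]_d := const_mx 1; exists (dot v (S *m v) / dot v v); exists v => //.
  by rewrite (lt_le_trans _ (sqr_coef_le_dot v (Ordinal d_gt0))) // mxE expr1n.
have E_lb : has_lbound E.
  have [c _ hc] := quad_form_bounded S.
  exists (- c) => _ [v v_gt0 ->]; rewrite ler_pdivlMr // mulNr lerNl.
  by apply: le_trans (hc v); rewrite -normrN ler_norm.
set m := inf E.
have m_lb v : m * dot v v <= dot v (S *m v).
  have [v0|v_neq0] := eqVneq (dot v v) 0.
    by rewrite (dot_eq0 v0) /dot !mulmx0 mxE mulr0.
  have v_gt0 : 0 < dot v v by rewrite lt0r v_neq0 dot_ge0.
  by rewrite -ler_pdivlMr //; apply: (ge_inf E_lb); exists v.
exists m; split => //; set M := S - m%:M.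
have qM v : dot v (M *m v) = dot v (S *m v) - m * dot v v.
  by rewrite mulmxBl dotBr dot_scalar_mx.
have : \det M = 0.
  apply: psd_det_eq0 => [|v|e e_gt0].
  - by rewrite linearB /= S_sym tr_scalar_mx.
  - by rewrite qM subr_ge0.
  have [_ [v v_gt0 ->] ltme] := inf_adherent e_gt0 (conj E_neq0 E_lb).
  exists v => //; rewrite qM; rewrite ltr_pdivrMr // in ltme; lra.
move/eqP/det0P => [u u_neq0 /eqP]; rewrite mulmxBr mul_mx_scalar subr_eq0 => /eqP uS.
by apply/eigenvalueP; exists u.
Qed.

Lemma min_eigenvalue_rayleigh_lb d (S : 'M[R]_d) mu : S^T = S ->
  min_eigenvalue S mu -> forall v, mu * dot v v <= dot v (S *m v).
Proof.
move=> S_sym [mu_eig mu_min] v.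
have [m [m_eig m_lb]] := sym_eigenvalue_rayleigh_lb (eigenvalue_dim_gt0 mu_eig) S_sym.
exact: le_trans (ler_wpM2r (dot_ge0 v) (mu_min m m_eig)) (m_lb v).
Qed.

End QuadraticForms.

Lemma rnorm_sqr_le (R : realType) d (u : 'rV[R]_d) c :
  rnorm u <= c -> \sum_j u 0 j ^+ 2 <= c ^+ 2.
Proof.
rewrite /rnorm => uc; have S_ge0 : 0 <= \sum_j u 0 j ^+ 2.
  by apply: sumr_ge0 => j _; exact: sqr_ge0.
by rewrite -(sqr_sqrtr S_ge0) ler_pXn2r ?nnegrE ?(le_trans _ uc) ?sqrtr_ge0.
Qed.

Lemma feature_sqr_le (R : realType) n d (Phi : 'M[R]_(n, d)) c s (v : 'cV[R]_d) :
  rnorm (row s Phi) <= c -> (Phi *m v) s 0 ^+ 2 <= c ^+ 2 * dot v v.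
Proof.
move=> Phi_le; have -> : (Phi *m v) s 0 = dot (row s Phi)^T v.
  by rewrite dotE mxE; apply: eq_bigr => j _; rewrite !mxE.
apply: le_trans (dot_cauchy_schwarz _ _) _; rewrite ler_wpM2r ?dot_ge0 //.
by rewrite dotE; under eq_bigr do rewrite mxE -expr2; exact: rnorm_sqr_le.
Qed.

Lemma sqr_sub_scale_le (R : realFieldType) (a b beta B : R) : 0 <= beta ->
  a ^+ 2 <= B -> b ^+ 2 <= B -> (a - beta * b) ^+ 2 <= (1 + beta) ^+ 2 * B.
Proof.
move=> beta_ge0 aB bB; have := sqr_ge0 (a + b).
have := ler_wpM2l beta_ge0 aB; have := ler_wpM2l beta_ge0 bB.
have := ler_wpM2l (sqr_ge0 beta) bB; nra.
Qed.

Section TDMatrix.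
Variable R : realType.
Variables (n d : nat) (P : 'M[R]_n) (rho : 'rV[R]_n) (beta : R) (Phi : 'M[R]_(n, d)).
Hypotheses (P_stoch : stochastic P) (rho_stat : stationary_dist P rho).

(* AM-GM on each product, then stationarity [rho P = rho] for the [w_j^2] half. *)
Lemma stationary_dot_le (w : 'cV[R]_n) :
  \sum_i rho 0 i * w i 0 * (P *m w) i 0 <= \sum_i rho 0 i * w i 0 ^+ 2.
Proof.
have [P_ge0 P_sum1] := P_stoch; have [rho_ge0 [_ rhoP]] := rho_stat.
set rw2 := \sum_i rho 0 i * w i 0 ^+ 2.
have row_avg : \sum_i \sum_j rho 0 i * P i j * w i 0 ^+ 2 = rw2.
  by apply: eq_bigr => i _; rewrite -big_distrl -big_distrr /= P_sum1 mulr1.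
have col_avg : \sum_i \sum_j rho 0 i * P i j * w j 0 ^+ 2 = rw2.
  rewrite exchange_big; apply: eq_bigr => j _ /=; rewrite -big_distrl /=.
  by have := congr1 (fun M : 'rV[R]_n => M 0 j) rhoP; rewrite /= mxE => ->.
have -> : \sum_i rho 0 i * w i 0 * (P *m w) i 0 =
    \sum_i \sum_j rho 0 i * P i j * (w i 0 * w j 0).
  by apply: eq_bigr => i _; rewrite mxE big_distrr; apply: eq_bigr => j _ /=; ring.
suff : \sum_i \sum_j rho 0 i * P i j * (w i 0 * w j 0) <=
    (\sum_i \sum_j rho 0 i * P i j * w i 0 ^+ 2 +
     \sum_i \sum_j rho 0 i * P i j * w j 0 ^+ 2) / 2.
  by rewrite row_avg col_avg; lra.
rewrite -big_split mulr_suml; apply: ler_sum => i _; rewrite -big_split mulr_suml.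
apply: ler_sum => j _ /=; have := sqr_ge0 (w i 0 - w j 0).
by have := mulr_ge0 (rho_ge0 i) (P_ge0 i j); nra.
Qed.

Lemma TD_A_mulmx (v : 'cV[R]_d) : let w := Phi *m v in
  TD_A Phi rho P beta *m v = Phi^T *m (diag_mx rho *m (w - beta *: (P *m w))).
Proof. by rewrite /TD_A -!mulmxA mulmxBl mul1mx -scalemxAl. Qed.

Lemma TD_A_psd (v : 'cV[R]_d) : 0 <= beta <= 1 ->
  0 <= dot v (TD_A Phi rho P beta *m v).
Proof.
case/andP=> beta_ge0 beta_le1; have [rho_ge0 _] := rho_stat.
rewrite TD_A_mulmx /= dot_mulmx trmxK; set w := Phi *m v.
have -> : dot w (diag_mx rho *m (w - beta *: (P *m w))) =
    \sum_i rho 0 i * w i 0 ^+ 2 - beta * \sum_i rho 0 i * w i 0 * (P *m w) i 0.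
  rewrite dotE mulr_sumr -sumrB; apply: eq_bigr => i _.
  by rewrite mul_diag_mx !mxE; ring.
have := stationary_dot_le w.
have : 0 <= \sum_i rho 0 i * w i 0 ^+ 2.
  by apply: sumr_ge0 => i _; rewrite mulr_ge0 ?sqr_ge0.
by nra.
Qed.

Lemma stochastic_mulmx_sqr_le (w : 'cV[R]_n) (B : R) :
  (forall j, w j 0 ^+ 2 <= B) -> forall i, (P *m w) i 0 ^+ 2 <= B.
Proof.
have [P_ge0 P_sum1] := P_stoch; move=> w_le i; rewrite mxE.
apply: le_trans (@sqr_convex_comb_le _ _ (P i) (fun j => w j 0) (P_ge0 i) (P_sum1 i)) _.
rewrite -[B]mul1r -(P_sum1 i) mulr_suml.
by apply: ler_sum => j _; rewrite ler_wpM2l.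
Qed.

Lemma TD_A_sqr_norm_le (Phimax : R) (v : 'cV[R]_d) : 0 <= beta ->
  (forall s, rnorm (row s Phi) <= Phimax) ->
  dot (TD_A Phi rho P beta *m v) (TD_A Phi rho P beta *m v)
    <= ((1 + beta) * Phimax ^+ 2) ^+ 2 * dot v v.
Proof.
move=> beta_ge0 Phi_le; have [rho_ge0 [rho_sum1 _]] := rho_stat.
rewrite TD_A_mulmx /=; set w := Phi *m v; set z := w - beta *: (P *m w).
set B := Phimax ^+ 2 * dot v v.
have w_le s : w s 0 ^+ 2 <= B by apply: feature_sqr_le.
have z_le s : z s 0 ^+ 2 <= (1 + beta) ^+ 2 * B.
  have -> : z s 0 = w s 0 - beta * (P *m w) s 0 by rewrite !mxE.
  exact: sqr_sub_scale_le (w_le s) (stochastic_mulmx_sqr_le w_le s).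
have Av j : (Phi^T *m (diag_mx rho *m z)) j 0 = \sum_s rho 0 s * (Phi s j * z s 0).
  by rewrite mxE; apply: eq_bigr => s _; rewrite mul_diag_mx !mxE; ring.
rewrite dotE (eq_bigr (fun j => (\sum_s rho 0 s * (Phi s j * z s 0)) ^+ 2)) => [|j _];
  last by rewrite Av expr2.
apply: le_trans (_ : _ <= \sum_j \sum_s rho 0 s * (Phi s j * z s 0) ^+ 2) _.
  by apply: ler_sum => j _; apply: sqr_convex_comb_le.
rewrite exchange_big /=.
apply: le_trans (_ : _ <= \sum_s rho 0 s * ((1 + beta) ^+ 2 * B * Phimax ^+ 2)) _.
  apply: ler_sum => s _; rewrite -big_distrr /= ler_wpM2l //.
  under eq_bigr do rewrite exprMn mulrC.
  have row_le : \sum_j Phi s j ^+ 2 <= Phimax ^+ 2.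
    by have := rnorm_sqr_le (Phi_le s); under eq_bigr do rewrite mxE.
  rewrite -big_distrr /=; apply: ler_pM (z_le s) row_le; first exact: sqr_ge0.
  by apply: sumr_ge0 => j _; exact: sqr_ge0.
by rewrite -big_distrl /= rho_sum1 mul1r /B; lra.
Qed.

End TDMatrix.

Lemma regularized_step_contraction (R : realFieldType) d (A : 'M[R]_d) (mu K lambda gamma : R) :
  0 <= mu -> 0 <= K -> 0 < lambda -> 0 < gamma ->
  gamma * (lambda + K) ^+ 2 <= lambda ->
  (forall v, mu * dot v v <= dot v (A *m v)) ->
  (forall v, dot (A *m v) (A *m v) <= K ^+ 2 * dot v v) ->
  forall v, let Cv := (1%:M - gamma *: (A + lambda%:M)) *m v in
  dot Cv Cv <= (1 - gamma * (mu + lambda)) * dot v v.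
Proof.
move=> mu_ge0 K_ge0 lambda_gt0 gamma_gt0 step_le A_lb A_ub v /=.
set N := dot v v; set q := dot v (A *m v); set NA := dot (A *m v) (A *m v).
have N_ge0 : 0 <= N := dot_ge0 v.
have q_lb : mu * N <= q := A_lb v.
have NA_ub : NA <= K ^+ 2 * N := A_ub v.
have q_ub : q <= K * N.
  have q_ge0 : 0 <= q by apply: le_trans q_lb; rewrite mulr_ge0.
  rewrite -(ler_pXn2r (n := 2)) ?nnegrE ?mulr_ge0 //.
  apply: le_trans (dot_cauchy_schwarz _ _) _; rewrite -/N -/NA.
  by have := ler_wpM2l N_ge0 NA_ub; nra.
have -> : (1%:M - gamma *: (A + lambda%:M)) *m v =
    (1 - gamma * lambda) *: v + (- gamma) *: (A *m v).
  rewrite mulmxBl mul1mx -scalemxAl mulmxDl mul_scalar_mx scalerDr scalerA.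
  by rewrite scalerBl scale1r scaleNr opprD addrA addrAC.
rewrite dot_linear_comb -/N -/q -/NA.
have := ler_wpM2l (ltW gamma_gt0) q_lb.
have := ler_wpM2l (mulr_ge0 (sqr_ge0 gamma) (ltW lambda_gt0)) q_ub.
have := ler_wpM2l (sqr_ge0 gamma) NA_ub.
have := ler_wpM2l (mulr_ge0 (ltW gamma_gt0) N_ge0) step_le.
have := mulr_ge0 (ltW gamma_gt0) (mulr_ge0 mu_ge0 N_ge0).
lra.
Qed.

Lemma geometric_sum_le (R : realFieldType) (r : R) n : 0 <= r -> r < 1 ->
  \sum_(i < n) r ^+ i <= (1 - r)^-1.
Proof.
move=> r_ge0 r_lt1; have r1_gt0 : 0 < 1 - r by rewrite subr_gt0.
have telescope : (1 - r) * \sum_(i < n) r ^+ i = 1 - r ^+ n.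
  elim: n => [|n IHn]; first by rewrite big_ord0 mulr0 expr0 subrr.
  by rewrite big_ord_recr /= mulrDr IHn exprS; ring.
rewrite -(ler_pM2l r1_gt0) telescope mulfV ?gt_eqF //.
by rewrite gerBl exprn_ge0.
Qed.

Lemma contraction_factor_ge0 (R : realFieldType) d (C : 'M[R]_d) r : (0 < d)%N ->
  (forall v, dot (C *m v) (C *m v) <= r * dot v v) -> 0 <= r.
Proof.
move=> d_gt0 C_le; pose v : 'cV[R]_d := const_mx 1.
have v_gt0 : 0 < dot v v.
  by rewrite (lt_le_trans _ (sqr_coef_le_dot v (Ordinal d_gt0))) // mxE expr1n.
by rewrite -(pmulr_lge0 _ v_gt0) (le_trans (dot_ge0 _) (C_le v)).
Qed.

Lemma sqnorm_dot (R : realType) d (v : 'cV[R]_d) : sqnorm v = dot v v.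
Proof. by rewrite dotE; apply: eq_bigr => i _; rewrite expr2. Qed.

Lemma sqnorm_pow_le (R : realType) d (C : 'M[R]_d) r : 0 <= r ->
  (forall v, dot (C *m v) (C *m v) <= r * dot v v) ->
  forall i v, sqnorm (C ^+ i *m v) <= r ^+ i * sqnorm v.
Proof.
move=> r_ge0 C_le i v; elim: i => [|i IHi]; first by rewrite expr0 mul1mx mul1r.
rewrite exprS -mulmxE -mulmxA !sqnorm_dot in IHi *.
by rewrite (le_trans (C_le _)) // exprS -mulrA ler_wpM2l.
Qed.

Section ExpectedContraction.
Variables (R : realType) (dT : measure_display) (T : measurableType dT).
Variables (Pr : probability T R) (d : nat) (x : T -> 'cV[R]_d).
Hypothesis x_meas : forall i, measurable_fun setT (fun w => x w i 0).

Lemma measurable_sqnorm_mulmx (M : 'M[R]_d) :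
  measurable_fun setT (fun w => sqnorm (M *m x w)).
Proof.
rewrite /sqnorm; under eq_fun do rewrite -big_enum.
apply: measurable_sum => k; apply: measurable_funX.
under eq_fun do rewrite mxE -big_enum.
by apply: measurable_sum => j; apply: measurable_funM => //; exact: measurable_cst.
Qed.

Lemma measurable_sqnorm : measurable_fun setT (fun w => sqnorm (x w)).
Proof. by have := measurable_sqnorm_mulmx 1%:M; under eq_fun do rewrite mul1mx. Qed.

Variables (C : 'M[R]_d) (r : R).
Hypotheses (r_ge0 : 0 <= r) (C_le : forall v, dot (C *m v) (C *m v) <= r * dot v v).

Lemma expectation_sqnorm_pow_le i :
  ('E_Pr[fun w => sqnorm (C ^+ i *m x w)] <= (r ^+ i)%:E * 'E_Pr[fun w => sqnorm (x w)])%E.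
Proof.
have sqnorm_ge0 (v : 'cV[R]_d) : 0 <= sqnorm v by rewrite sqnorm_dot dot_ge0.
rewrite !unlock -ge0_integralZl //=; first last.
- exact: exprn_ge0.
- by move=> w _; exact: sqnorm_ge0.
- exact/measurable_EFinP/measurable_sqnorm.
apply: ge0_le_integral => //= [w _|||w _].
- exact: sqnorm_ge0.
- exact/measurable_EFinP/measurable_sqnorm_mulmx.
- by apply/measurable_EFinP/measurable_funM; [exact: measurable_cst|exact: measurable_sqnorm].
- by rewrite -EFinM lee_fin sqnorm_pow_le.
Qed.

Lemma sum_expectation_sqnorm_pow_le t : r < 1 ->
  (\sum_(i < t) 'E_Pr[fun w => sqnorm (C ^+ i *m x w)]
     <= 'E_Pr[fun w => sqnorm (x w)] * ((1 - r)^-1)%:E)%E.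
Proof.
move=> r_lt1.
apply: (@le_trans _ _ (\sum_(i < t) (r ^+ i)%:E * 'E_Pr[fun w => sqnorm (x w)])%E).
  by apply: lee_sum => i _; exact: expectation_sqnorm_pow_le.
rewrite -ge0_sume_distrl => [|i _]; last by rewrite lee_fin exprn_ge0.
rewrite sumEFin muleC lee_wpmul2l ?lee_fin ?geometric_sum_le //.
by apply: expectation_ge0 => w; rewrite sqnorm_dot dot_ge0.
Qed.

End ExpectedContraction.

Theorem mainTheorem18 (R : realType) (n d : nat)
  (P : 'M[R]_n) (rho : 'rV[R]_n) (beta : R) (Phi : 'M[R]_(n, d)) (Phimax : R)
  (mu lambda gamma : R)
  (dT : measure_display) (T : measurableType dT) (Pr : probability T R)
  (x : T -> 'cV[R]_d) (t : nat) :
  stochastic P -> irreducible_mx P -> stationary_dist P rho ->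
  0 < beta < 1 ->
  (forall s : 'I_n, rnorm (row s Phi) <= Phimax) ->
  \rank Phi = d ->
  min_eigenvalue ((2%:R)^-1 *: (TD_A Phi rho P beta + (TD_A Phi rho P beta)^T)) mu ->
  0 < lambda ->
  0 < gamma ->
  gamma <= lambda / (lambda ^+ 2 + 2%:R * lambda * (1 + beta) * Phimax ^+ 2
                     + (1 + beta) ^+ 2 * Phimax ^+ 4) ->
  (forall i : 'I_d, measurable_fun setT (fun w => x w i 0)) ->
  Pr.-integrable setT (fun w => (sqnorm (x w))%:E) ->
  let C := 1%:M - gamma *: (TD_A Phi rho P beta + lambda%:M) in
  (\sum_(i < t.+1) 'E_Pr[fun w => sqnorm (C ^+ i *m x w)]
     <= 'E_Pr[fun w => sqnorm (x w)] * ((gamma * (mu + lambda))^-1)%:E)%E.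
Proof.
(* Irreducibility and full rank only serve to make [mu > 0]; [mu >= 0] suffices
   here. *)
move=> P_stoch _ rho_stat /andP[beta_gt0 beta_lt1] Phi_le _ mu_min lambda_gt0
  gamma_gt0 gamma_le x_meas _; cbv zeta.
set A := TD_A Phi rho P beta; set K := (1 + beta) * Phimax ^+ 2.
have A_psd v : 0 <= dot v (A *m v) by apply: TD_A_psd; rewrite ?ltW.
have mu_ge0 : 0 <= mu.
  by apply: psd_eigenvalue_ge0 mu_min.1 => v; rewrite dot_sym_part.
have A_lb v : mu * dot v v <= dot v (A *m v).
  by rewrite -dot_sym_part; apply: min_eigenvalue_rayleigh_lb (sym_part_tr A) mu_min v.
have K_ge0 : 0 <= K by rewrite mulr_ge0 ?sqr_ge0 ?addr_ge0 ?ltW.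
have step_le : gamma * (lambda + K) ^+ 2 <= lambda.
  have den : lambda ^+ 2 + 2%:R * lambda * (1 + beta) * Phimax ^+ 2
      + (1 + beta) ^+ 2 * Phimax ^+ 4 = (lambda + K) ^+ 2 by rewrite /K; ring.
  by rewrite -ler_pdivlMr ?exprn_gt0 ?ltr_pwDl // -den.
have C_le := regularized_step_contraction mu_ge0 K_ge0 lambda_gt0 gamma_gt0 step_le
  A_lb (fun v => TD_A_sqr_norm_le P_stoch rho_stat v (ltW beta_gt0) Phi_le).
have r_ge0 := contraction_factor_ge0 (eigenvalue_dim_gt0 mu_min.1) C_le.
have := sum_expectation_sqnorm_pow_le Pr x_meas r_ge0 C_le t.+1.
by rewrite subKr; apply; rewrite ltrBlDr ltrDl mulr_gt0 // ltr_wpDl.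
Qed.
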